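(* Let $n=p_1^{\alpha_1}p_2^{\alpha_2}p_3^{\alpha_3}p_4^{\alpha_4}$ where $p_1,p_2,p_3,p_4$ are distinct primes and $\alpha_i\geq 1$ are integers. Then $\mathbb{AG}(\mathbb{Z}_n)$ is perfect if and only if $\alpha_i=1$ for all $i\in\{1,2,3,4\}$.
   Context: For a commutative ring $R$ with unity, the annihilating-ideal graph $\mathbb{AG}(R)$ is the simple graph whose vertex set is the set of all non-zero ideals of $R$ with non-zero annihilator, two distinct vertices $I,J$ being adjacent if and only if $IJ=0$. A graph $G$ is perfect if $\omega(H)=\chi(H)$ for every induced subgraph $H$ of $G$. *)

From HB Require Import structures.
From mathcomp Require Import all_boot all_order all_algebra.
Set Implicit Arguments. Unset Strict Implicit. Unset Printing Implicit Defensive.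
Import GRing.Theory.
Local Open Scope ring_scope.

Section Ideals.
Variable R : finComNzRingType.

Definition is_ideal (I : {set R}) : bool :=
  [&& (0 : R) \in I,
      [forall x in I, forall y in I, x - y \in I] &
      [forall r : R, forall x in I, r * x \in I]].

Definition ann (I : {set R}) : {set R} := [set r : R | [forall x in I, r * x == 0]].

(* product ideal IJ is zero  <=>  every product x*y (x in I, y in J) is zero
   (IJ is generated by these products) *)
Definition ideal_prod_zero (I J : {set R}) : bool :=
  [forall x in I, forall y in J, x * y == 0].

Definition AG_vertices : {set {set R}} :=
  [set I : {set R} | [&& is_ideal I, I != [set 0] & ann I != [set 0]]].

Definition AG_adj : rel {set R} := fun I J => (I != J) && ideal_prod_zero I J.
End Ideals.

Section Graphs.
Variable T : finType.
Variable e : rel T.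

Definition is_clique (K : {set T}) : bool :=
  [forall x in K, forall y in K, (x != y) ==> e x y].

Definition clique_number (S : {set T}) : nat :=
  \max_(K : {set T} | (K \subset S) && is_clique K) #|K|.

Definition proper_coloring (S : {set T}) (f : {ffun T -> 'I_#|T|}) : bool :=
  [forall x in S, forall y in S, ((x != y) && e x y) ==> (f x != f y)].

(* chromatic number of the subgraph induced on S: minimum number of colours
   used by a proper colouring (#|T| colours always suffice) *)
Definition chromatic_number (S : {set T}) : nat :=
  \big[minn/#|T|]_(f : {ffun T -> 'I_#|T|} | proper_coloring S f) #|f @: S|.

Definition perfect (V : {set T}) : Prop :=
  forall S : {set T}, S \subset V -> clique_number S = chromatic_number S.
End Graphs.

Definition AG_perfect (R : finComNzRingType) : Prop :=
  perfect (@AG_adj R) (AG_vertices R).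

(* For squarefree n, the product IJ vanishes in Z_n iff no prime of n fails to
   divide some element of I and also some element of J.  Hence AG(Z_n) is a graph
   on nonempty subsets of the (at most four) primes of n, with adjacency given by
   disjointness, and such graphs are perfect: colour a vertex by one of its labels
   that is itself a singleton vertex, or else by one extra colour.  Two adjacent
   vertices with the extra colour would be disjoint sets of size at least 2 avoiding
   all singleton labels, impossible among four points, while the singleton vertices
   (with one extra-coloured vertex, if any) form a clique as large as the set of
   colours used.  If p^2 divides n = p^a q^b r^c s^d, five principal ideals whose
   generators are chosen so that exactly the cyclically consecutive products are
   divisible by n form an induced 5-cycle, an odd hole. *)

From mathcomp Require Import all_boot all_order all_algebra zify ring.
Set Implicit Arguments. Unset Strict Implicit. Unset Printing Implicit Defensive.
Import Order.TTheory GRing.Theory.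

Section CliquesAndColorings.
Variables (T : finType) (e : rel T).
Implicit Types (S K : {set T}).

Lemma cliqueP K : reflect {in K &, forall x y, x != y -> e x y} (is_clique e K).
Proof.
apply: (iffP forallP) => [cK x y xK yK xy | cK x].
  by move: (cK x); rewrite xK => /forallP/(_ y); rewrite yK xy.
by apply/implyP => xK; apply/forall_inP => y yK; apply/implyP; apply: cK.
Qed.

Lemma clique_number_ge S K : K \subset S -> is_clique e K -> #|K| <= clique_number e S.
Proof. by move=> sKS cK; apply: (@leq_bigmax_cond _ _ (fun K => #|K|) K); rewrite sKS. Qed.

Lemma clique_number_le S m :
  (forall K, K \subset S -> is_clique e K -> #|K| <= m) -> clique_number e S <= m.
Proof. by move=> leKm; apply/bigmax_leqP => K /andP[]; apply: leKm. Qed.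

Lemma chromatic_number_le S (C : finType) (c : T -> C) : #|C| <= #|T| ->
  {in S &, forall x y, x != y -> e x y -> c x != c y} ->
  chromatic_number e S <= #|c @: S|.
Proof.
move=> leCT c_proper; pose f := [ffun x => widen_ord leCT (enum_rank (c x))].
have f_proper : proper_coloring e S f.
  apply/forall_inP => x xS; apply/forall_inP => y yS; apply/implyP => /andP[xy exy].
  rewrite !ffunE; apply: contraNneq (c_proper x y xS yS xy exy).
  by move=> /(congr1 val) /= /val_inj /enum_rank_inj ->.
apply: (@leq_trans #|f @: S|).
  have := bigmin_le_cond #|T| (fun g : {ffun T -> 'I_#|T|} => #|g @: S|) f_proper.
  by rewrite minEnat.
have -> : f @: S = (fun k => widen_ord leCT (enum_rank k)) @: (c @: S).
  by rewrite -imset_comp; apply: eq_imset => x; rewrite ffunE.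
exact: leq_imset_card.
Qed.

Lemma chromatic_number_ge S m : m <= #|T| ->
  (forall f, proper_coloring e S f -> m <= #|f @: S|) -> m <= chromatic_number e S.
Proof.
move=> lemT lem_f; rewrite /chromatic_number.
by elim/big_ind: _ => // a b ma mb; rewrite leq_min ma mb.
Qed.

Lemma clique_card_le_colors S K f : K \subset S -> is_clique e K ->
  proper_coloring e S f -> #|K| <= #|f @: S|.
Proof.
move=> sKS /cliqueP cK f_proper; rewrite -(@card_in_imset _ _ f K).
  exact/subset_leq_card/imsetS.
move=> x y xK yK; apply: contra_eq => xy.
move/forall_inP: f_proper => /(_ x (subsetP sKS x xK))/forall_inP/(_ y (subsetP sKS y yK)).
by rewrite xy cK.
Qed.

Lemma clique_number_le_chromatic S : clique_number e S <= chromatic_number e S.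
Proof.
apply: chromatic_number_ge => [|f f_proper].
  by apply: clique_number_le => K _ _; apply: max_card.
by apply: clique_number_le => K sKS cK; apply: clique_card_le_colors f_proper.
Qed.

Lemma perfect_of_chromatic_le (V : {set T}) :
  (forall S, S \subset V -> chromatic_number e S <= clique_number e S) -> perfect e V.
Proof.
by move=> le_chi S sSV; apply/eqP; rewrite eqn_leq clique_number_le_chromatic le_chi.
Qed.

Lemma clique_set1 x : is_clique e [set x].
Proof. by apply/cliqueP => y z /set1P-> /set1P->; rewrite eqxx. Qed.

Lemma edgeless_chromatic_le S : 0 < #|T| -> {in S &, forall x y, ~~ e x y} ->
  chromatic_number e S <= clique_number e S.
Proof.
move=> T_gt0 no_edge; apply: leq_trans (chromatic_number_le (c := fun=> tt) _ _) _.
- by rewrite card_unit.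
- by move=> x y xS yS _; rewrite (negbTE (no_edge x y xS yS)).
have [-> | [x xS]] := set_0Vmem S; first by rewrite imset0 cards0.
apply: leq_trans (clique_number_ge _ (clique_set1 x)); last by rewrite sub1set.
by rewrite cards1 -card_unit max_card.
Qed.

Lemma clique_setU1 K z : is_clique e K ->
  {in K, forall y, y != z -> e z y && e y z} -> is_clique e (z |: K).
Proof.
move=> /cliqueP cK ez; apply/cliqueP => x y /setU1P[->|xK] /setU1P[->|yK].
- by rewrite eqxx.
- by rewrite eq_sym => /(ez y yK)/andP[].
- by move=> /(ez x xK)/andP[].
- exact: cK.
Qed.

End CliquesAndColorings.

Definition c5 (i j : 'I_5) : bool := (i.+1 %% 5 == j) || (j.+1 %% 5 == i).

Lemma c5_irrefl i : ~~ c5 i i.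
Proof. by case: i => [[|[|[|[|[|?]]]]] ?]. Qed.

Lemma c5_triangle_free i j k : ~~ [&& c5 i j, c5 j k & c5 i k].
Proof.
by case: i => [[|[|[|[|[|?]]]]] ?]; case: j => [[|[|[|[|[|?]]]]] ?];
  case: k => [[|[|[|[|[|?]]]]] ?].
Qed.

Lemma c5_nbhd_inj i j : (forall k, c5 k i = c5 k j) -> i = j.
Proof.
move=> same; apply/eqP; move: (same (inord 0)) (same (inord 1)) (same (inord 2)).
move: (same (inord 3)) (same (inord 4)); rewrite /c5 !inordK //=.
by case: i {same} => [[|[|[|[|[|?]]]]] ?]; case: j => [[|[|[|[|[|?]]]]] ?].
Qed.

Lemma c5_coloring_gt2 (C : finType) (g : 'I_5 -> C) :
  (forall i j, c5 i j -> g i != g j) -> 2 < #|g @: setT|.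
Proof.
move=> g_proper; pose o (m : nat) : 'I_5 := inord m.
have g_adj (i j : nat) : c5 (o i) (o j) -> g (o i) != g (o j) by apply: g_proper.
have three_colors i j k : g i != g j -> g j != g k -> g k != g i -> 2 < #|g @: setT|.
  by move=> ij jk ki; apply/card_gt2P; exists (g i), (g j), (g k); rewrite !imset_f.
have [g20 | g20] := eqVneq (g (o 2)) (g (o 0)).
  have [g31 | g31] := eqVneq (g (o 3)) (g (o 1)).
    apply: (three_colors (o 0) (o 1) (o 4)).
    - by apply: g_adj; rewrite /c5 !inordK.
    - by rewrite -g31 eq_sym g_adj // /c5 !inordK.
    - by apply: g_adj; rewrite /c5 !inordK.
  apply: (three_colors (o 1) (o 2) (o 3)) => //.
  - by apply: g_adj; rewrite /c5 !inordK.
  - by apply: g_adj; rewrite /c5 !inordK.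
apply: (three_colors (o 0) (o 1) (o 2)) => //.
- by apply: g_adj; rewrite /c5 !inordK.
- by apply: g_adj; rewrite /c5 !inordK.
Qed.

Section C5.
Variables (T : finType) (e : rel T).

Lemma not_perfect_of_c5 (V : {set T}) (v : 'I_5 -> T) :
  3 <= #|T| -> (forall i, v i \in V) -> (forall i j, e (v i) (v j) = c5 i j) ->
  ~ perfect e V.
Proof.
move=> T_ge3 vV ev perf; pose S := v @: setT.
have sSV : S \subset V by apply/subsetP => _ /imsetP[i _ ->].
have omega_le2 : clique_number e S <= 2.
  apply: clique_number_le => K sKS /cliqueP cK; rewrite leqNgt; apply/card_gt2P.
  move=> [x [y [z [[xK yK zK] [xy yz zx]]]]].
  have [i _ xi] := imsetP (subsetP sKS x xK).
  have [j _ yj] := imsetP (subsetP sKS y yK).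
  have [k _ zk] := imsetP (subsetP sKS z zK).
  have := c5_triangle_free i j k.
  by rewrite -!ev -xi -yj -zk !cK // eq_sym.
have chi_ge3 : 3 <= chromatic_number e S.
  apply: chromatic_number_ge => // f f_proper; rewrite -imset_comp.
  apply: c5_coloring_gt2 => i j cij /=; have vij : v i != v j.
    by apply: contraTneq cij => vij; rewrite -ev vij ev (negbTE (c5_irrefl j)).
  move/forall_inP: f_proper => /(_ (v i) (imset_f _ (in_setT i))).
  by move/forall_inP => /(_ (v j) (imset_f _ (in_setT j))); rewrite vij ev cij.
by move: omega_le2; rewrite (perf S sSV) leqNgt chi_ge3.
Qed.

End C5.

Section DisjointnessGraph.
Variables (T U : finType) (e : rel T) (V : {set T}) (phi : T -> {set U}).
Hypothesis U_le4 : #|U| <= 4.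
(* Colourings in [chromatic_number] take values in ['I_#|T|]; the colourings
   below use the #|U| + 1 colours [option U]. *)
Hypothesis U_lt_T : #|U| < #|T|.
Hypothesis phi_neq0 : {in V, forall x, phi x != set0}.
Hypothesis e_disjoint : {in V &, forall x y, e x y = (x != y) && [disjoint phi x & phi y]}.

Lemma card_gt1_disjoint_set0 (A B W : {set U}) : [disjoint A & B] -> 1 < #|A| -> 1 < #|B| ->
  [disjoint A & W] -> [disjoint B & W] -> W = set0.
Proof.
move=> dAB A_gt1 B_gt1 dAW dBW; apply/eqP; rewrite -cards_eq0.
have : A :|: B \subset ~: W by rewrite subUset -!disjoints_subset dAW dBW.
move/subset_leq_card; rewrite cardsU (disjoint_setI0 dAB) cards0 subn0.
by have := cardsC W; lia.
Qed.

Let e_sym : {in V &, forall x y, e x y = e y x}.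
Proof. by move=> x y xV yV; rewrite !e_disjoint // eq_sym disjoint_sym. Qed.

Section InducedSubgraph.
Variable S : {set T}.
Hypothesis sSV : S \subset V.

Let phi_neq0S : {in S, forall x, phi x != set0}.
Proof. by move=> x /(subsetP sSV); apply: phi_neq0. Qed.

Let e_disjointS : {in S &, forall x y, e x y = (x != y) && [disjoint phi x & phi y]}.
Proof. by move=> x y /(subsetP sSV) xV /(subsetP sSV); apply: e_disjoint. Qed.

Let e_symS : {in S &, forall x y, e x y = e y x}.
Proof. by move=> x y /(subsetP sSV) xV /(subsetP sSV); apply: e_sym. Qed.

Definition singleton_labels : {set U} := [set i | [set i] \in phi @: S].

Definition pick_coloring (W : {set U}) (x : T) : option U := [pick i in phi x :&: W].

Lemma pick_coloring_None (W : {set U}) x : (pick_coloring W x == None) = [disjoint phi x & W].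
Proof.
rewrite /pick_coloring -setI_eq0; case: pickP => [i iW | none]; apply/esym.
  by apply/set0Pn; exists i.
by apply/eqP/setP => i; rewrite none inE.
Qed.

Lemma pick_coloring_sub (W : {set U}) : pick_coloring W @: S \subset None |: (Some @: W).
Proof.
apply/subsetP => _ /imsetP[x _ ->]; rewrite /pick_coloring.
by case: pickP => [i /setIP[_ iW] | _]; rewrite !inE ?imset_f ?orbT.
Qed.

Lemma card_labels_gt1 (W : {set U}) : singleton_labels \subset W ->
  {in S, forall x, [disjoint phi x & W] -> 1 < #|phi x|}.
Proof.
move=> sHW x xS dxW; rewrite ltn_neqAle card_gt0 phi_neq0S // andbT.
rewrite eq_sym; apply/negP => /cards1P[i phi_x].
have iW : i \in W by apply: (subsetP sHW); rewrite inE -phi_x imset_f.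
by move: dxW; rewrite phi_x disjoints1 iW.
Qed.

Lemma pick_coloring_proper (W : {set U}) : W != set0 -> singleton_labels \subset W ->
  {in S &, forall x y, x != y -> e x y -> pick_coloring W x != pick_coloring W y}.
Proof.
move=> W_neq0 sHW x y xS yS xy; rewrite e_disjointS // xy /= => dxy.
case: (eqVneq (pick_coloring W x) None) => [cx | cx]; last first.
  move: cx; rewrite /pick_coloring; case: pickP => // i /setIP[ix _] _.
  case: pickP => // j /setIP[jy _]; apply: contraTneq dxy => -[ij].
  by apply/negP => /disjointFr/(_ ix); rewrite ij jy.
rewrite cx eq_sym; apply: contra W_neq0 => cy.
have dxW : [disjoint phi x & W] by rewrite -pick_coloring_None cx.
have dyW : [disjoint phi y & W] by rewrite -pick_coloring_None.
apply/eqP/(card_gt1_disjoint_set0 dxy _ _ dxW dyW).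
  exact: card_labels_gt1 sHW x xS dxW.
exact: card_labels_gt1 sHW y yS dyW.
Qed.

Lemma card_setU1_None (W : {set U}) : #|None |: (Some @: W)| = #|W|.+1.
Proof.
by rewrite cardsU1 (card_imset _ Some_inj); case: imsetP => // -[].
Qed.

Lemma singleton_labels_clique : singleton_labels != set0 ->
  exists K : {set T}, [/\ K \subset S, is_clique e K, #|K| = #|singleton_labels|
              & {in K, forall y, phi y \subset singleton_labels}].
Proof.
case/set0Pn => i0; rewrite inE => /imsetP[z0 z0S _].
pose rep i := odflt z0 [pick z in S | phi z == [set i]].
have rep_spec i : i \in singleton_labels -> rep i \in S /\ phi (rep i) = [set i].
  rewrite inE /rep => /imsetP[z zS phi_z]; case: pickP => [w /andP[wS /eqP] | /(_ z)] //.
  by rewrite zS -phi_z eqxx.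
exists (rep @: singleton_labels); split.
- by apply/subsetP => _ /imsetP[i /rep_spec[] ? _ ->].
- apply/cliqueP => _ _ /imsetP[i iH ->] /imsetP[j jH ->] rij.
  have [riS phi_ri] := rep_spec i iH; have [rjS phi_rj] := rep_spec j jH.
  rewrite e_disjointS // rij phi_ri phi_rj disjoints1 inE.
  by apply: contraNneq rij => ->.
- apply: card_in_imset => i j /rep_spec[_ phi_ri] /rep_spec[_ phi_rj] rij.
  by apply/set1P; rewrite -phi_rj -rij phi_ri set11.
- by move=> _ /imsetP[i iH ->]; have [_ ->] := rep_spec i iH; rewrite sub1set.
Qed.

Let colors_le_T : #|{: option U}| <= #|T|.
Proof. by rewrite card_option. Qed.

Lemma chromatic_le_clique_no_singletons x y : singleton_labels = set0 ->
  x \in S -> y \in S -> e x y -> chromatic_number e S <= clique_number e S.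
Proof.
move=> H0 xS yS exy; have [u0 u0x] := set0Pn _ (phi_neq0S xS).
have xy : x != y by move: exy; rewrite e_disjointS // => /andP[].
have u0_neq0 : [set u0] != set0 by apply/set0Pn; exists u0; rewrite inE.
have sHu0 : singleton_labels \subset [set u0] by rewrite H0 sub0set.
apply: leq_trans (chromatic_number_le colors_le_T (pick_coloring_proper u0_neq0 sHu0)) _.
apply: leq_trans (subset_leq_card (pick_coloring_sub _)) _.
have card_xy : #|[set x; y]| = 2 by rewrite cards2 xy.
rewrite card_setU1_None cards1 -card_xy; apply: clique_number_ge.
  by rewrite subUset !sub1set xS yS.
apply: clique_setU1 (clique_set1 e y) _ => _ /set1P-> _.
by rewrite exy -e_symS.
Qed.

Lemma chromatic_le_clique_singletons : singleton_labels != set0 ->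
  chromatic_number e S <= clique_number e S.
Proof.
move=> H_neq0; have [K [sKS cK card_K labels_K]] := singleton_labels_clique H_neq0.
apply: leq_trans (chromatic_number_le colors_le_T (pick_coloring_proper H_neq0 (subxx _))) _.
have [/exists_inP[z zS dzH] | all_labelled] :=
  boolP [exists z in S, [disjoint phi z & singleton_labels]].
  have z_adj w : w \in K -> w != z -> e z w && e w z.
    move=> wK wz; have wS := subsetP sKS w wK.
    rewrite -e_symS // andbb e_disjointS //.
    by rewrite wz disjoint_sym (disjointWr (labels_K w wK) dzH).
  apply: leq_trans (subset_leq_card (pick_coloring_sub _)) _.
  rewrite card_setU1_None -card_K.
  apply: leq_trans (clique_number_ge _ (clique_setU1 cK z_adj)).
    rewrite cardsU1; case: (boolP (z \in K)) => // zK.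
    move: (disjointWr (labels_K z zK) dzH).
    by rewrite -setI_eq0 setIid (negPf (phi_neq0S zS)).
  by rewrite subUset sub1set zS.
apply: leq_trans (subset_leq_card (_ : _ \subset Some @: singleton_labels)) _.
  apply/subsetP => _ /imsetP[z zS ->]; move/exists_inPn: all_labelled => /(_ z zS).
  rewrite -pick_coloring_None /pick_coloring; case: pickP => // i /setIP[_ iH] _.
  exact: imset_f.
by rewrite (card_imset _ Some_inj) -card_K clique_number_ge.
Qed.

Lemma chromatic_le_clique : chromatic_number e S <= clique_number e S.
Proof.
have [/existsP[x /existsP[y /and3P[xS yS exy]]] | /existsPn no_edge] :=
  boolP [exists x, exists y, [&& x \in S, y \in S & e x y]].
  have [H0 | H_neq0] := eqVneq singleton_labels set0.
    exact: chromatic_le_clique_no_singletons H0 xS yS exy.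
  exact: chromatic_le_clique_singletons.
apply: edgeless_chromatic_le; first exact: leq_ltn_trans U_lt_T.
by move=> x y xS yS; move/existsPn: (no_edge x) => /(_ y); rewrite xS yS.
Qed.

End InducedSubgraph.

Theorem perfect_disjointness_graph : perfect e V.
Proof. by apply: perfect_of_chromatic_le => S; apply: chromatic_le_clique. Qed.

End DisjointnessGraph.

Section PrincipalIdeals.
Variable R : finComNzRingType.
Local Open Scope ring_scope.

Definition principal (a : R) : {set R} := [set a * x | x : R].

Lemma principal_self a : a \in principal a.
Proof. by apply/imsetP; exists 1 => //; rewrite mulr1. Qed.

Lemma principal_ideal a : is_ideal (principal a).
Proof.
apply/and3P; split.
- by apply/imsetP; exists 0 => //; rewrite mulr0.
- apply/forall_inP => _ /imsetP[x _ ->]; apply/forall_inP => _ /imsetP[y _ ->].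
  by apply/imsetP; exists (x - y) => //; rewrite mulrBr.
- apply/forallP => r; apply/forall_inP => _ /imsetP[x _ ->].
  by apply/imsetP; exists (r * x) => //; rewrite mulrCA.
Qed.

Lemma principal_prod_zero a b : ideal_prod_zero (principal a) (principal b) = (a * b == 0).
Proof.
apply/forall_inP/eqP => [|ab0 _ /imsetP[x _ ->]].
  by move=> /(_ a (principal_self a))/forall_inP/(_ b (principal_self b))/eqP.
by apply/forall_inP => _ /imsetP[y _ ->]; rewrite mulrACA ab0 mul0r.
Qed.

Lemma principal_vertex a b :
  a != 0 -> b != 0 -> a * b = 0 -> principal a \in AG_vertices R.
Proof.
move=> a_neq0 b_neq0 ab0; rewrite inE principal_ideal /=; apply/andP; split.
  by apply: contra a_neq0 => /eqP/setP/(_ a); rewrite principal_self inE => /esym.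
apply: contra b_neq0 => /eqP/setP/(_ b); rewrite !inE => <-.
by apply/forall_inP => _ /imsetP[x _ ->]; rewrite mulrA [b * a]mulrC ab0 mul0r.
Qed.

End PrincipalIdeals.

Lemma card_set (T : finType) : #|{set T}| = (2 ^ #|T|)%N.
Proof. by have := card_powerset [set: T]; rewrite powersetT !cardsT. Qed.

Section Zn.
Variable n : nat.
Local Open Scope ring_scope.
Hypothesis n_gt1 : (1 < n)%N.

Lemma card_Zn : #|'Z_n| = n.
Proof. by rewrite card_ord Zp_cast. Qed.

Lemma Zn_natr_eq0 m : ((m%:R : 'Z_n) == 0) = (n %| m)%N.
Proof. by rewrite -val_eqE /= (val_Zp_nat n_gt1). Qed.

Lemma Zn_mul_eq0 (x y : 'Z_n) : (x * y == 0) = (n %| x * y)%N.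
Proof. by rewrite -Zn_natr_eq0 natrM !natr_Zp. Qed.

Lemma not_AG_perfect_Zn_of_c5 (d : 'I_5 -> nat) :
  (forall i j, (n %| d i * d j)%N = c5 i j) -> ~ AG_perfect 'Z_n.
Proof.
move=> dvd_c5; pose v i : {set 'Z_n} := principal (d i)%:R.
have prod0 i j : ideal_prod_zero (v i) (v j) = c5 i j.
  by rewrite principal_prod_zero -natrM Zn_natr_eq0.
have v_inj : injective v by move=> i j vij; apply: c5_nbhd_inj => k; rewrite -!prod0 vij.
have d_neq0 i : (d i)%:R != 0 :> 'Z_n.
  by rewrite Zn_natr_eq0; apply: contra (c5_irrefl i) => ndi; rewrite -dvd_c5 dvdn_mulr.
apply: (@not_perfect_of_c5 _ _ _ v).
- by rewrite card_set card_Zn (@leq_trans (2 ^ 2)) // leq_exp2l.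
- move=> i; pose j : 'I_5 := inord (i.+1 %% 5).
  apply: (principal_vertex (d_neq0 i) (d_neq0 j)); apply/eqP.
  by rewrite -natrM Zn_natr_eq0 dvd_c5 /c5 inordK ?eqxx ?ltn_pmod.
- move=> i j; rewrite /AG_adj prod0 (inj_eq v_inj).
  by case: eqVneq => [-> | //]; rewrite (negbTE (c5_irrefl j)).
Qed.

End Zn.

Section FourPrimes.
Variables p q r s : nat.
Hypothesis primes_pqrs : all prime [:: p; q; r; s].
Hypothesis uniq_pqrs : uniq [:: p; q; r; s].

Definition mon4 (i j k l : nat) : nat := p ^ i * q ^ j * r ^ k * s ^ l.

Lemma mon4M i j k l i' j' k' l' :
  mon4 i j k l * mon4 i' j' k' l' = mon4 (i + i') (j + j') (k + k') (l + l').
Proof. by rewrite /mon4 !expnD; ring. Qed.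

Lemma mon4_gt0 i j k l : 0 < mon4 i j k l.
Proof.
by case/and5P: primes_pqrs => *; rewrite !muln_gt0 !expn_gt0 !prime_gt0.
Qed.

Lemma logn_mon4 x i j k l :
  logn x (mon4 i j k l) = i * (x == p) + j * (x == q) + k * (x == r) + l * (x == s).
Proof.
case/and5P: primes_pqrs => pp pq pr ps _.
by rewrite !lognM ?muln_gt0 ?expn_gt0 ?prime_gt0 // !lognX !logn_prime.
Qed.

Lemma dvdn_mon4 i j k l i' j' k' l' :
  (mon4 i j k l %| mon4 i' j' k' l') = [&& i <= i', j <= j', k <= k' & l <= l'].
Proof.
apply/idP/and4P => [dv | [le_i le_j le_k le_l]]; last first.
  by rewrite /mon4 !dvdn_mul ?dvdn_exp2l.
have le x := dvdn_leq_log x (mon4_gt0 i' j' k' l') dv.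
move: (le p) (le q) (le r) (le s); rewrite !logn_mon4 !eqxx.
move: uniq_pqrs; rewrite /= !inE !negb_or => /and4P[/and3P[pq pr ps] /andP[qr qs] rs _].
rewrite ![q == p]eq_sym ![r == _]eq_sym ![s == _]eq_sym.
rewrite (negPf pq) (negPf pr) (negPf ps) (negPf qr) (negPf qs) (negPf rs).
by rewrite !muln0 !muln1 !addn0 !add0n.
Qed.

Variables a b c d : nat.
Hypotheses (a_gt1 : 1 < a) (b_gt0 : 0 < b) (c_gt0 : 0 < c) (d_gt0 : 0 < d).

(* Cyclically consecutive divisors together reach every exponent of
   [mon4 a b c d]; for any other pair, and for a divisor with itself, the
   exponents of some prime add up to less than in [mon4 a b c d]. *)
Definition c5_divisor (i : 'I_5) : nat :=
  match val i with
  | 0 => mon4 0 b c d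
  | 1 => mon4 a 0 0 d
  | 2 => mon4 1 b c 0
  | 3 => mon4 a.-1 0 c d
  | _ => mon4 a b 0 0
  end.

Lemma dvdn_c5_divisor i j : (mon4 a b c d %| c5_divisor i * c5_divisor j) = c5 i j.
Proof.
rewrite /c5_divisor.
case: i => [[|[|[|[|[|?]]]]] ?] //; case: j => [[|[|[|[|[|?]]]]] ?] //.
all: by rewrite mon4M dvdn_mon4 /c5 /=; lia.
Qed.

Theorem AG_Zn_not_perfect : ~ AG_perfect 'Z_(p ^ a * q ^ b * r ^ c * s ^ d).
Proof.
apply: (@not_AG_perfect_Zn_of_c5 _ _ c5_divisor dvdn_c5_divisor).
case/and5P: primes_pqrs => pp pq pr ps _.
have pa_gt1 : 1 < p ^ a by rewrite -(expn0 p) ltn_exp2l ?prime_gt1 // ltnW.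
by rewrite /mon4 -!mulnA (leq_trans pa_gt1) // leq_pmulr // !muln_gt0 !expn_gt0 !prime_gt0.
Qed.

End FourPrimes.

Lemma dvdn_prod_primes (s : seq nat) m : all prime s -> uniq s ->
  (\prod_(p <- s) p %| m) = all (dvdn^~ m) s.
Proof.
elim: s => [|p s IH] /=; first by rewrite big_nil dvd1n.
case/andP => pp ps /andP[pNs us]; rewrite big_cons Gauss_dvd ?IH // prime_coprime //.
rewrite Euclid_dvd_prod // big_has; apply/hasPn => q qs /=.
by rewrite dvdn_prime2 ?(allP ps q qs) //; apply: contraNneq pNs => ->.
Qed.

Lemma size_lt_prod_primes (s : seq nat) : all prime s -> size s < \prod_(p <- s) p.
Proof.
elim: s => [|p s IH] /=; first by rewrite big_nil.
case/andP => pp /IH size_lt; rewrite big_cons.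
exact: leq_ltn_trans size_lt (ltn_Pmull (prime_gt1 pp) (leq_ltn_trans (leq0n _) size_lt)).
Qed.

Section Squarefree.
Variable s : seq nat.
Hypotheses (primes_s : all prime s) (uniq_s : uniq s) (size_s : 0 < size s <= 4).

Local Notation n := (\prod_(p <- s) p).

Lemma squarefree_gt1 : 1 < n.
Proof.
by case/andP: size_s => size_gt0 _; apply: leq_trans (size_lt_prod_primes primes_s).
Qed.

Definition nondividing_primes (I : {set 'Z_n}) : {set seq_sub s} :=
  [set p | [exists x in I, ~~ (val p %| x)]].

Lemma ideal_prod_zero_disjoint I J :
  ideal_prod_zero I J = [disjoint nondividing_primes I & nondividing_primes J].
Proof.
apply/idP/idP => [/forall_inP prod0 | dIJ].
  rewrite -setI_eq0; apply/eqP/setP => p; rewrite !inE; apply/negP.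
  move=> /andP[/exists_inP[x xI npx] /exists_inP[y yJ npy]].
  move/forall_inP: (prod0 x xI) => /(_ y yJ).
  rewrite Zn_mul_eq0 ?squarefree_gt1 // dvdn_prod_primes // => /allP/(_ _ (valP p)).
  by rewrite Euclid_dvdM ?(allP primes_s _ (valP p)) // (negPf npx) (negPf npy).
apply/forall_inP => x xI; apply/forall_inP => y yJ.
rewrite Zn_mul_eq0 ?squarefree_gt1 // dvdn_prod_primes //; apply/allP => p ps.
rewrite Euclid_dvdM ?(allP primes_s) //; case: (boolP (p %| x)) => //= npx.
have pI : SeqSub ps \in nondividing_primes I by rewrite inE; apply/exists_inP; exists x.
by move: (disjointFr dIJ pI); rewrite inE => /negbT/exists_inPn/(_ y yJ)/negPn.
Qed.

Lemma nondividing_primes_neq0 I : I \in AG_vertices 'Z_n -> nondividing_primes I != set0.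
Proof.
rewrite inE => /and3P[/and3P[I0 _ _] I_neq0 _].
have /set0Pn[x /setD1P[x_neq0 xI]] : I :\ 0%R != set0.
  apply: contra I_neq0; rewrite setD_eq0 eqEsubset => ->.
  by rewrite sub1set.
move: x_neq0; rewrite -[x]natr_Zp Zn_natr_eq0 ?squarefree_gt1 // dvdn_prod_primes //.
case/allPn => p ps npx; apply/set0Pn; exists (SeqSub ps); rewrite inE.
by apply/exists_inP; exists x.
Qed.

Theorem AG_Zn_squarefree_perfect : AG_perfect 'Z_n.
Proof.
apply: (perfect_disjointness_graph (phi := nondividing_primes)).
- by rewrite card_seq_sub //; case/andP: size_s.
- rewrite card_seq_sub // card_set card_Zn ?squarefree_gt1 //.
  exact: ltn_trans (size_lt_prod_primes primes_s) (ltn_expl _ (ltnSn 1)).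
- by move=> I; apply: nondividing_primes_neq0.
- by move=> I J _ _; rewrite /AG_adj ideal_prod_zero_disjoint.
Qed.

End Squarefree.

Theorem lemma2 (p1 p2 p3 p4 a1 a2 a3 a4 n : nat) :
  prime p1 -> prime p2 -> prime p3 -> prime p4 ->
  uniq [:: p1; p2; p3; p4] ->
  (0 < a1)%N -> (0 < a2)%N -> (0 < a3)%N -> (0 < a4)%N ->
  n = (p1 ^ a1 * p2 ^ a2 * p3 ^ a3 * p4 ^ a4)%N ->
  AG_perfect 'Z_n <->
  [/\ a1 = 1%N, a2 = 1%N, a3 = 1%N & a4 = 1%N].
Proof.
move=> pp1 pp2 pp3 pp4 uniq_p a1_gt0 a2_gt0 a3_gt0 a4_gt0 ->.
have primes_p : all prime [:: p1; p2; p3; p4] by rewrite /= pp1 pp2 pp3 pp4.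
split=> [perfect_n | [-> -> -> ->]]; last first.
  have := AG_Zn_squarefree_perfect primes_p uniq_p isT.
  by rewrite !big_cons big_nil muln1 !mulnA !expn1.
have exponent1 k q1 q2 q3 q4 a b c d :
    [:: q1; q2; q3; q4] = rot k [:: p1; p2; p3; p4] ->
    p1 ^ a1 * p2 ^ a2 * p3 ^ a3 * p4 ^ a4 = q1 ^ a * q2 ^ b * q3 ^ c * q4 ^ d ->
    0 < a -> 0 < b -> 0 < c -> 0 < d -> a = 1.
  move=> qE nE a_gt0 b_gt0 c_gt0 d_gt0; apply/eqP; rewrite eqn_leq a_gt0 andbT leqNgt.
  apply/negP => a_gt1; move: perfect_n; rewrite nE.
  apply: AG_Zn_not_perfect; rewrite ?qE ?rot_uniq //.
  by apply/allP => x; rewrite mem_rot; apply/allP.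
split.
- exact: (exponent1 0 p1 p2 p3 p4 a1 a2 a3 a4).
- by apply: (exponent1 1 p2 p3 p4 p1 a2 a3 a4 a1) => //; ring.
- by apply: (exponent1 2 p3 p4 p1 p2 a3 a4 a1 a2) => //; ring.
- by apply: (exponent1 3 p4 p1 p2 p3 a4 a1 a2 a3) => //; ring.
Qed.
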